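(* Let $S$ be a non-abelian finite simple group with universal covering group $\widetilde{S}$, and let $\chi$ be a non-principal irreducible character of $\widetilde{S}$. Then $S$ has a non-principal irreducible character of degree at most $\chi(1)^2-1$.
   Context: The universal covering group $\widetilde{S}$ of a non-abelian finite simple group $S$ is its Schur cover: the perfect central extension of $S$ by its Schur multiplier. *)

From mathcomp Require Import all_boot all_order all_algebra all_fingroup all_solvable all_field all_character.
Set Implicit Arguments. Unset Strict Implicit. Unset Printing Implicit Defensive.
Import GroupScope.

Definition covering_group (gT sT : finGroupType) (G : {group gT})
    (S : {group sT}) (f : {morphism G >-> sT}) : Prop :=
  [/\ f @* G = S, 'ker f \subset 'Z(G) & [~: G, G] = G].

Definition universal_covering_group (gT sT : finGroupType) (G : {group gT})
    (S : {group sT}) (f : {morphism G >-> sT}) : Prop :=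
  covering_group S f /\
  forall (hT : finGroupType) (H : {group hT}) (g : {morphism H >-> sT}),
    covering_group S g ->
    exists h : {morphism G >-> hT},
      h @* G = H /\ {in G, forall x, g (h x) = f x}.

From mathcomp Require Import all_boot all_order all_algebra all_fingroup all_solvable all_field all_character.
Set Implicit Arguments.
Unset Strict Implicit.
Unset Printing Implicit Defensive.

Import GroupScope GRing.Theory Num.Theory.
Local Open Scope ring_scope.

(* For chi irreducible, chi * chi^* is a character of degree chi(1)^2 containing
   the principal character exactly once, and it is trivial on the centre. In a
   perfect group chi is nonlinear, so chi * chi^* - 1 is a nonzero character;
   its irreducible constituents are non-principal, of degree at most
   chi(1)^2 - 1, and contain the central kernel of the cover U -> S in their
   kernels, hence are inflated from irreducible characters of S. *)

Section IrrMulConjC.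

Variables (gT : finGroupType) (G : {group gT}) (i : Iirr G).

Lemma irr_mul_conjC_char : 'chi_i * ('chi_i)^*%CF \is a character.
Proof. by rewrite rpredM ?cfConjC_char ?irr_char. Qed.

Lemma irr_mul_conjC1 : ('chi_i * ('chi_i)^*%CF) 1%g = 'chi_i 1%g ^+ 2.
Proof. by rewrite !cfunE irr1_degree rmorph_nat expr2. Qed.

Lemma cfdot_irr_mul_conjC_1 : '['chi_i * ('chi_i)^*%CF, 1] = 1.
Proof.
rewrite -(cfnorm_irr i) !cfdotE; congr (_ * _); apply: eq_bigr => x Gx.
by rewrite !cfunE cfun1E Gx conjC1 mulr1.
Qed.

Lemma center_sub_cfker_irr_mul_conjC : 'Z(G) \subset cfker ('chi_i * ('chi_i)^*%CF).
Proof.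
apply/subsetP => x Zx; have Gx := subsetP (center_sub G) x Zx.
have : x \in 'Z('chi_i)%CF.
  by rewrite -cap_cfcenter_irr in Zx; move/bigcapP: Zx; apply.
rewrite irr_cfcenterE // => /eqP chi_x.
rewrite cfkerEchar ?irr_mul_conjC_char // inE Gx irr_mul_conjC1.
by rewrite /= !cfunE -normCK chi_x.
Qed.

Lemma irr_mul_conjC_nonprincipal_constt :
    'chi_i 1%g != 1 ->
  exists k, [/\ k != 0, k \in irr_constt ('chi_i * ('chi_i)^*%CF)
              & 'chi_k 1%g <= 'chi_i 1%g ^+ 2 - 1].
Proof.
move=> chi1_neq1; set psi := 'chi_i * _.
have psi_0 : 0 \in irr_constt psi.
  by rewrite irr_consttE irr0 cfdot_irr_mul_conjC_1 oner_eq0.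
have [phi Nphi Dpsi] := constt_charP _ irr_mul_conjC_char psi_0.
have phi1 : phi 1%g = 'chi_i 1%g ^+ 2 - 1.
  have := irr_mul_conjC1; rewrite Dpsi cfunE irr0 cfun11 => <-.
  by rewrite addrC addKr.
have cfdot_phi_1 : '[phi, 'chi_0] = 0.
  have := cfdot_irr_mul_conjC_1; rewrite Dpsi irr0 cfdotDl cfnorm1.
  by rewrite -{2}[1]addr0 => /addrI.
have nz_phi : phi != 0.
  apply: contra chi1_neq1 => /eqP phi0; move: phi1.
  rewrite phi0 cfunE => /esym/eqP; rewrite subr_eq0 sqrf_eq1 => /orP[] // /eqP.
  by move=> chi1_N1; have := irr1_gt0 i; rewrite chi1_N1 oppr_gt0 ltr10.
have [k phi_k] := neq0_has_constt nz_phi.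
have nz_k : k != 0.
  by apply: contraTneq phi_k => ->; rewrite irr_consttE cfdot_phi_1 eqxx.
exists k; split=> //; last by rewrite -phi1 char1_ge_constt.
rewrite irr_consttE; move/(congr1 (cfdotr 'chi_k)): Dpsi; rewrite !cfdotrE => ->.
by rewrite cfdotDl cfdot_irr [0 == k]eq_sym (negPf nz_k) add0r.
Qed.

End IrrMulConjC.

Lemma perfect_irr1_neq1 (gT : finGroupType) (G : {group gT}) (i : Iirr G) :
  [~: G, G] = G -> i != 0 -> 'chi_i 1%g != 1.
Proof.
move=> perfG; apply: contra => chi1.
have : 'chi_i \is a linear_char by rewrite qualifE/= irr_char chi1.
by rewrite lin_irr_der1 derg1 perfG subGcfker.
Qed.

Lemma exists_Iirr_morphim_of_cfker (aT rT : finGroupType) (G : {group aT})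
    (S : {group rT}) (f : {morphism G >-> rT}) (k : Iirr G) :
    f @* G = S -> 'ker f \subset cfker 'chi_k ->
  exists j : Iirr S, (j == 0) = (k == 0) /\ 'chi_j 1%g = 'chi_k 1%g.
Proof.
move=> imf kerk; have nsK : 'ker f <| G := ker_normal f.
have [g injg img] := first_isom f.
have isoS : isom (G / 'ker f)%G S g by apply/isomP; rewrite img imf.
exists (isom_Iirr isoS (quo_Iirr ('ker f) k)).
by rewrite isom_Iirr_eq0 quo_Iirr_eq0 // isom_IirrE cfIsom1 quo_IirrE // cfQuo1.
Qed.

Theorem proposition3p1 (sT : finGroupType) (S : {group sT})
    (gT : finGroupType) (U : {group gT}) (f : {morphism U >-> sT}) :
  simple S -> ~~ abelian S ->
  universal_covering_group S f ->
  forall i : Iirr U, i != 0 ->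
  exists j : Iirr S, j != 0 /\ 'chi_j 1%g <= 'chi_i 1%g ^+ 2 - 1.
Proof.
move=> _ _ [[imf kerZ perfU] _] i nz_i.
have [k [nz_k psi_k le_k]] :=
  irr_mul_conjC_nonprincipal_constt (perfect_irr1_neq1 perfU nz_i).
have ker_k : 'ker f \subset cfker 'chi_k.
  apply: subset_trans kerZ (subset_trans (center_sub_cfker_irr_mul_conjC i) _).
  exact: cfker_constt (irr_mul_conjC_char i) psi_k.
have [j [j0 j1]] := exists_Iirr_morphim_of_cfker imf ker_k.
by exists j; rewrite j0 j1.
Qed.
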